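(* Let $U\subseteq F^d$ be open, $\mathbf x_0\in U$, $f=(f_1,\dots,f_n):U\to F^n$ satisfy (II), (III), (IV) and $\theta:U\to F$ satisfy (VI). Then for every sufficiently small neighbourhood $V\subseteq U$ of $\mathbf x_0$ there exists $M_0>1$ such that $$\inf_{(\mathbf a,a_0)\in F^{n}\times F,\ \|\mathbf a\|\ge M_0}\ \sup_{\mathbf x\in V}|a_0+\mathbf a\cdot f(\mathbf x)+\theta(\mathbf x)|>0.$$
   Context: $F=\mathbb F_q((X^{-1}))$ with $|a|=q^{\deg a}$, sup norm on $F^k$. Difference quotients $\Phi_\beta$ with continuous extensions $\bar\Phi_\beta$ ($\Phi^kg(x_1,\dots,x_{k+1})=\frac{\Phi^{k-1}g(x_1,x_3,\dots)-\Phi^{k-1}g(x_2,x_3,\dots)}{x_1-x_2}$, iterated per variable). (II) $f$ analytic, extends analytically to the boundary of $U$, $f_1(\mathbf x)=x_1$. (III) $1,f_1,\dots,f_n$ restricted to any open subset of $U$ are linearly independent over $F$. (IV) $\|f\|\le1$, $\|\nabla f\|\le1$, $\|\bar\Phi_\beta f(\cdot)\|\le1$ for all $|\beta|=2$. (VI) $\theta$ analytic, extends analytically to the boundary, $|\theta|\le1$, $\|\nabla\theta\|\le1$, $|\bar\Phi_\beta\theta(\cdot)|\le1$ for all $|\beta|=2$. *)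

From HB Require Import structures.
From mathcomp Require Import all_boot all_order all_algebra.
From mathcomp Require Import boolp classical_sets reals Rstruct.
From Stdlib Require Rdefinitions.

Set Implicit Arguments.
Unset Strict Implicit.
Unset Printing Implicit Defensive.

Import Order.TTheory GRing.Theory Num.Theory.
Local Open Scope classical_set_scope.
Local Open Scope ring_scope.
Local Notation R := Rdefinitions.R.

(* The field F = F_q((X^{-1})) of Laurent series in X^{-1} over a finite    *)
(* field K with q = #|K| elements.  An element is a coefficient function    *)
(* a : int -> K (a m = coefficient of X^m) with support bounded above.      *)

Section Laurent.
Variable K : finFieldType.

Definition LS := {a : int -> K | exists N : int, forall m : int, N < m -> a m = 0}.

Definition coef (a : LS) : int -> K := proj1_sig a.

Definition LS_zero : LS.
Proof. exists (fun _ => 0); by exists 0. Defined.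

Definition LS_one : LS.
Proof.
exists (fun m : int => if m == 0 then 1 else 0).
by exists 0 => m hm; rewrite gt_eqF.
Defined.

Definition LS_add (a b : LS) : LS.
Proof.
exists (fun m => coef a m + coef b m).
case: (proj2_sig a) => Na Ha; case: (proj2_sig b) => Nb Hb.
exists (Num.max Na Nb) => m hm.
rewrite /coef Ha ?Hb ?addr0 //.
  by apply: le_lt_trans hm; rewrite le_max lexx orbT.
by apply: le_lt_trans hm; rewrite le_max lexx.
Defined.

Definition LS_opp (a : LS) : LS.
Proof.
exists (fun m => - coef a m).
case: (proj2_sig a) => Na Ha; exists Na => m hm.
by rewrite /coef Ha // oppr0.
Defined.

Definition LS_sub (a b : LS) : LS := LS_add a (LS_opp b).

Definition LS_deg (a : LS) : int :=
  match pselect (exists d : int, coef a d != 0 /\ forall m, d < m -> coef a m = 0) with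
  | left P => projT1 (cid P)
  | right _ => 0
  end.

(* Cauchy product: (ab)_m = sum_{i+j=m} a_i b_j, a finite sum *)
Definition LS_mul (a b : LS) : LS.
Proof.
exists (fun m : int =>
  if m <= LS_deg a + LS_deg b then
    \sum_(k < (absz (LS_deg a + LS_deg b - m)%R).+1)
       coef a (LS_deg a - k%:Z) * coef b (m - LS_deg a + k%:Z)
  else 0).
exists (LS_deg a + LS_deg b) => m hm.
by rewrite leNgt hm.
Defined.

(* multiplicative inverse (chosen; 0 if none exists, i.e. for a = 0) *)
Definition LS_inv (a : LS) : LS :=
  match pselect (exists b : LS, LS_mul a b = LS_one) with
  | left P => projT1 (cid P)
  | right _ => LS_zero
  end.

Definition LS_div (a b : LS) : LS := LS_mul a (LS_inv b).

Definition LS_abs (a : LS) : R :=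
  match pselect (exists m : int, coef a m != 0) with
  | left _ => ((#|K|%:R : R) ^ (LS_deg a))%R
  | right _ => 0
  end.

Definition LS_exp (a : LS) (k : nat) : LS := iter k (LS_mul a) LS_one.

Definition vsub (k : nat) (x y : 'I_k -> LS) : 'I_k -> LS := fun i => LS_sub (x i) (y i).

Definition vnorm (k : nat) (x : 'I_k -> LS) : R :=
  \big[Num.max/0]_(i < k) LS_abs (x i).

Definition vball (k : nat) (x : 'I_k -> LS) (r : R) : set ('I_k -> LS) :=
  [set y | vnorm (vsub y x) < r].

Definition vopen (k : nat) (U : set ('I_k -> LS)) : Prop :=
  forall x, U x -> exists2 r : R, 0 < r & vball x r `<=` U.

Definition vnbhd (k : nat) (x : 'I_k -> LS) (V : set ('I_k -> LS)) : Prop :=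
  exists2 r : R, 0 < r & vball x r `<=` V.

Definition vclosure (k : nat) (U : set ('I_k -> LS)) : set ('I_k -> LS) :=
  [set y | forall r : R, 0 < r -> exists2 x, U x & vnorm (vsub x y) < r].

Definition vdot (k : nat) (a b : 'I_k -> LS) : LS :=
  \big[LS_add/LS_zero]_(i < k) LS_mul (a i) (b i).

Definition LS_sum (s : seq LS) : LS := foldr LS_add LS_zero s.

Definition monom (d : nat) (al : {ffun 'I_d -> nat}) (y : 'I_d -> LS) : LS :=
  \big[LS_mul/LS_one]_(i < d) LS_exp (y i) (al i).

Definition has_sum (d : nat) (t : {ffun 'I_d -> nat} -> LS) (s : LS) : Prop :=
  forall e : R, 0 < e -> exists S : seq {ffun 'I_d -> nat},
    forall T : seq {ffun 'I_d -> nat}, uniq T -> {subset S <= T} ->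
      LS_abs (LS_sub (LS_sum (map t T)) s) < e.

Definition analytic_on (d : nat) (W : set ('I_d -> LS)) (g : ('I_d -> LS) -> LS) : Prop :=
  forall x0, W x0 -> exists c : {ffun 'I_d -> nat} -> LS,
    exists2 r : R, 0 < r & vball x0 r `<=` W /\
      forall x, vball x0 r x ->
        has_sum (fun al => LS_mul (c al) (monom al (vsub x x0))) (g x).

Definition analytic_to_boundary (d : nat) (U : set ('I_d -> LS)) (g : ('I_d -> LS) -> LS) : Prop :=
  analytic_on U g /\
  exists W : set ('I_d -> LS), [/\ vopen W, vclosure U `<=` W &
    exists2 h, analytic_on W h & forall x, U x -> h x = g x].

Definition vupd (d : nat) (x : 'I_d -> LS) (i : 'I_d) (t : LS) : 'I_d -> LS :=
  fun j => if j == i then t else x j.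

Definition is_partial (d : nat) (U : set ('I_d -> LS)) (g : ('I_d -> LS) -> LS)
    (i : 'I_d) (x : 'I_d -> LS) (L : LS) : Prop :=
  forall e : R, 0 < e -> exists2 del : R, 0 < del &
    forall t : LS, 0 < LS_abs t -> LS_abs t < del ->
      U (vupd x i (LS_add (x i) t)) ->
      LS_abs (LS_sub (LS_div (LS_sub (g (vupd x i (LS_add (x i) t))) (g x)) t) L) < e.

Definition grad_le1 (d : nat) (U : set ('I_d -> LS)) (g : ('I_d -> LS) -> LS) : Prop :=
  forall x, U x -> forall i : 'I_d, exists2 L, is_partial U g i x L & LS_abs L <= 1.

(* Difference quotients Phi_beta.  A "multi-point" P : 'I_d -> seq F gives *)
(* for each variable i the list of values (x_1, ..., x_{k+1}) taken by that *)
(* variable.                                                                 *)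

Definition mupd (d : nat) (P : 'I_d -> seq LS) (i : 'I_d) (s : seq LS) : 'I_d -> seq LS :=
  fun j => if j == i then s else P j.

Definition phi1 (d : nat) (i : 'I_d) (G : ('I_d -> seq LS) -> LS) (P : 'I_d -> seq LS) : LS :=
  match P i with
  | x1 :: x2 :: rest =>
      LS_div (LS_sub (G (mupd P i (x1 :: rest))) (G (mupd P i (x2 :: rest))))
             (LS_sub x1 x2)
  | _ => LS_zero
  end.

Definition lift0 (d : nat) (g : ('I_d -> LS) -> LS) (P : 'I_d -> seq LS) : LS :=
  g (fun i => head LS_zero (P i)).

Definition Phi (d : nat) (beta : 'I_d -> nat) (g : ('I_d -> LS) -> LS) : ('I_d -> seq LS) -> LS :=
  foldr (fun i G => iter (beta i) (phi1 i) G) (lift0 g) (enum 'I_d).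

(* multi-points of shape beta all of whose "grid points" lie in U:
   domain of the continuous extension bar Phi_beta *)
Definition Dbar (d : nat) (beta : 'I_d -> nat) (U : set ('I_d -> LS)) : set ('I_d -> seq LS) :=
  [set P | (forall i, size (P i) = (beta i).+1) /\
     forall c : 'I_d -> nat, (forall i, (c i < size (P i))%N) ->
       U (fun i => nth LS_zero (P i) (c i))].

(* those with pairwise distinct values in each variable: domain of Phi_beta *)
Definition Dphi (d : nat) (beta : 'I_d -> nat) (U : set ('I_d -> LS)) : set ('I_d -> seq LS) :=
  [set P | Dbar beta U P /\
     forall i (k l : nat), (k < size (P i))%N -> (l < size (P i))%N -> k <> l ->
       nth LS_zero (P i) k <> nth LS_zero (P i) l].

Definition mdist (d : nat) (beta : 'I_d -> nat) (P Q : 'I_d -> seq LS) : R :=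
  \big[Num.max/0]_(i < d) \big[Num.max/0]_(k < (beta i).+1)
     LS_abs (LS_sub (nth LS_zero (P i) k) (nth LS_zero (Q i) k)).

Definition barPhi_le1 (d : nat) (beta : 'I_d -> nat) (U : set ('I_d -> LS))
    (g : ('I_d -> LS) -> LS) : Prop :=
  exists G : ('I_d -> seq LS) -> LS,
    [/\ (forall P, Dbar beta U P -> forall e : R, 0 < e -> exists2 del : R, 0 < del &
           forall Q, Dbar beta U Q -> mdist beta P Q < del ->
             LS_abs (LS_sub (G Q) (G P)) < e),
        (forall P, Dphi beta U P -> G P = Phi beta g P) &
        (forall P, Dbar beta U P -> LS_abs (G P) <= 1)].

End Laurent.

(* The functions 1, f_1, ..., f_n are linearly independent on a small ball
   inside V, so there are points y_0, ..., y_n of the ball at which the matrix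
   (1, f(y_k))_k is invertible.  Cramer's rule bounds the coefficients (a0, a)
   by a constant times max_k |a0 + a.f(y_k)|, hence for |a| >= M0 one of these
   values has absolute value at least 2.  As |theta| <= 1, the ultrametric
   inequality gives |a0 + a.f(y_k) + theta(y_k)| >= 2, so every supremum, and
   therefore the infimum, is at least 2. *)

From HB Require Import structures.
From mathcomp Require Import all_boot all_order all_algebra.
From mathcomp Require Import boolp classical_sets reals Rstruct.
From mathcomp Require Import zify lra.
From Stdlib Require Rdefinitions.

Set Implicit Arguments.
Unset Strict Implicit.
Unset Printing Implicit Defensive.

Import Order.TTheory GRing.Theory Num.Theory.
Local Open Scope classical_set_scope.
Local Open Scope ring_scope.
Local Notation R := Rdefinitions.R.

Lemma eq_big_supp (V : nmodType) (I : eqType) (s t : seq I) (F : I -> V) :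
  uniq s -> uniq t ->
  (forall i, F i != 0 -> i \in s) -> (forall i, F i != 0 -> i \in t) ->
  \sum_(i <- s) F i = \sum_(i <- t) F i.
Proof.
move=> us ut sF tF.
have nz_sum r : \sum_(i <- r) F i = \sum_(i <- r | F i != 0) F i.
  by rewrite [RHS]big_mkcond; apply: eq_bigr => i _; case: eqP.
rewrite !nz_sum -[LHS]big_filter -[RHS]big_filter.
apply/perm_big/uniq_perm; rewrite ?filter_uniq // => i.
by rewrite !mem_filter; case: (F i =P 0) => //= /eqP Fi; rewrite sF ?tF.
Qed.

Definition int_window (lo hi : int) : seq int :=
  [seq lo + k%:Z | k <- iota 0 (absz (hi - lo)).+1].

Lemma int_window_uniq lo hi : uniq (int_window lo hi).
Proof. by rewrite map_inj_uniq ?iota_uniq // => k l /addrI []. Qed.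

Lemma mem_int_window lo hi i : lo <= i <= hi -> i \in int_window lo hi.
Proof.
move=> /andP [hlo hhi]; apply/mapP; exists (absz (i - lo)); rewrite ?mem_iota; lia.
Qed.

Section LaurentRing.
Variable K : finFieldType.
Local Notation LS := (LS K).
Local Notation coef := (@coef K).

Lemma LS_ext (a b : LS) : coef a =1 coef b -> a = b.
Proof.
case: a b => [a Ha] [b Hb] /funext /= eab; subst b.
by congr exist; exact: Prop_irrelevance.
Qed.

Lemma coef_add a b m : coef (LS_add a b) m = coef a m + coef b m. Proof. by []. Qed.
Lemma coef_opp a m : coef (LS_opp a) m = - coef a m. Proof. by []. Qed.
Lemma coef_zero m : coef (LS_zero K) m = 0. Proof. by []. Qed.
Lemma coef_one m : coef (LS_one K) m = (m == 0)%:R. Proof. by rewrite /coef /=; case: eqP. Qed.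

Definition supp_le (a : LS) (B : int) := forall i, B < i -> coef a i = 0.

Lemma coef_le (a : LS) B i : supp_le a B -> coef a i != 0 -> i <= B.
Proof. by move=> hB; apply: contraR; rewrite -ltNge => /hB ->. Qed.

Definition LS_nz (a : LS) := exists m, coef a m != 0.

Lemma LS_nzP (a : LS) : LS_nz a <-> a <> LS_zero K.
Proof.
split=> [[m am] a0|a0]; first by move: am; rewrite a0 coef_zero eqxx.
apply: contrapT => na; apply: a0; apply: LS_ext => m.
by rewrite coef_zero; apply: contrapT => am; apply: na; exists m; apply/eqP.
Qed.

Lemma LS_deg_exists (a : LS) : LS_nz a ->
  exists d : int, coef a d != 0 /\ forall m, d < m -> coef a m = 0.
Proof.
case=> m0 am0; case: (proj2_sig a) => N aN.
have m0N : m0 <= N by apply: coef_le am0.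
have exk : exists k : nat, coef a (N - k%:Z) != 0.
  by exists (absz (N - m0)); rewrite gez0_abs ?subr_ge0 // opprB addrCA subrr addr0.
case: (ex_minnP exk) => k ak kmin; exists (N - k%:Z); split => // m hm.
case: (lerP m N) => [mN|]; last exact: aN.
apply/eqP; apply: contraT => am; have := kmin (absz (N - m)).
rewrite gez0_abs ?subr_ge0 // opprB addrCA subrr addr0 => /(_ am); lia.
Qed.

Lemma LS_deg_spec (a : LS) : LS_nz a -> coef a (LS_deg a) != 0 /\ supp_le a (LS_deg a).
Proof.
rewrite /LS_deg => na; case: pselect => [P|]; last by move/(_ (LS_deg_exists na)).
by case: (cid P).
Qed.

Lemma LS_deg_supp (a : LS) : supp_le a (LS_deg a).
Proof.
have [/LS_deg_spec [] //|na] := pselect (LS_nz a).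
by move=> i _; apply: contrapT => ai; apply: na; exists i; apply/eqP.
Qed.

Lemma LS_deg_unique (a : LS) d : coef a d != 0 -> supp_le a d -> LS_deg a = d.
Proof.
move=> ad hd; have [ad' hd'] := LS_deg_spec (ex_intro _ d ad).
by apply/eqP; rewrite eq_le (coef_le hd ad') (coef_le hd' ad).
Qed.

Definition cprod (a b : LS) (m i : int) : K := coef a i * coef b (m - i).

Lemma cprod_neq0 (a b : LS) A B m i : supp_le a A -> supp_le b B ->
  cprod a b m i != 0 -> m - B <= i <= A.
Proof.
move=> hA hB; rewrite mulf_eq0 negb_or => /andP [/(coef_le hA) ? /(coef_le hB)]; lia.
Qed.

Lemma coef_mul_seq (a b : LS) m (s : seq int) : uniq s ->
  (forall i, cprod a b m i != 0 -> i \in s) ->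
  coef (LS_mul a b) m = \sum_(i <- s) cprod a b m i.
Proof.
move=> us sF; have hA := LS_deg_supp (a := a); have hB := LS_deg_supp (a := b).
rewrite /coef /LS_mul /= -!/(coef _); case: ifP => hm; last first.
  rewrite big1_seq // => i _; apply/eqP; apply: contraT => /(cprod_neq0 hA hB).
  by move: hm; lia.
set N := (absz _).+1; set G := fun k : nat => cprod a b m (LS_deg a - k%:Z).
rewrite (eq_bigr (fun k : 'I_N => G k)) => [|k _]; last first.
  by rewrite /G /cprod; congr (_ * coef b _); lia.
rewrite -(big_mkord xpredT G) /index_iota subn0 /G.
rewrite -(big_map (fun k : nat => LS_deg a - k%:Z) xpredT); apply: eq_big_supp => //.
  by rewrite map_inj_uniq ?iota_uniq // => k l /addrI /oppr_inj [].
move=> i /(cprod_neq0 hA hB) hi; apply/mapP; exists (absz (LS_deg a - i)).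
  by rewrite mem_iota /N; lia.
lia.
Qed.

Lemma coef_mul_window (a b : LS) A B m : supp_le a A -> supp_le b B ->
  coef (LS_mul a b) m = \sum_(i <- int_window (m - B) A) cprod a b m i.
Proof.
move=> hA hB; apply: coef_mul_seq; first exact: int_window_uniq.
by move=> i /(cprod_neq0 hA hB); apply: mem_int_window.
Qed.

Lemma supp_le_mul (a b : LS) A B : supp_le a A -> supp_le b B ->
  supp_le (LS_mul a b) (A + B).
Proof.
move=> hA hB m hm; rewrite (coef_mul_seq (s := [::])) ?big_nil // => i.
by move/(cprod_neq0 hA hB); lia.
Qed.

Lemma LS_mulC (a b : LS) : LS_mul a b = LS_mul b a.
Proof.
apply: LS_ext => m.
have hA := LS_deg_supp (a := a); have hB := LS_deg_supp (a := b).
set s := int_window (m - LS_deg b) (LS_deg a).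
rewrite (coef_mul_window m hA hB) (coef_mul_seq (s := [seq m - i | i <- s])).
- by rewrite [RHS]big_map; apply: eq_bigr => i _; rewrite /cprod mulrC subKr.
- by rewrite map_inj_uniq ?int_window_uniq // => i j /addrI /oppr_inj.
move=> j /(cprod_neq0 hB hA) hj; apply/mapP; exists (m - j); last by rewrite subKr.
by apply: mem_int_window; lia.
Qed.

Lemma LS_mulA (a b c : LS) : LS_mul a (LS_mul b c) = LS_mul (LS_mul a b) c.
Proof.
apply: LS_ext => m.
have hA := LS_deg_supp (a := a); have hB := LS_deg_supp (a := b).
have hC := LS_deg_supp (a := c).
set A := LS_deg a in hA *; set B := LS_deg b in hB *; set C := LS_deg c in hC *.
pose S := int_window (m - (B + C)) A.
pose T := int_window (m - A - C) B.
pose F i j := coef a i * (coef b j * coef c (m - i - j)).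
have -> : coef (LS_mul a (LS_mul b c)) m = \sum_(i <- S) \sum_(j <- T) F i j.
  rewrite (coef_mul_window m hA (supp_le_mul hB hC)); apply: eq_bigr => i _.
  have [ai0|ai] := eqVneq (coef a i) 0.
    by rewrite /cprod ai0 mul0r big1 // => j _; rewrite /F ai0 mul0r.
  rewrite /cprod (coef_mul_seq (s := T)) ?int_window_uniq ?mulr_sumr // => j.
  by move=> /(cprod_neq0 hB hC) hj; have := coef_le hA ai => iA; apply: mem_int_window; lia.
have -> : coef (LS_mul (LS_mul a b) c) m =
    \sum_(l <- int_window (m - C) (A + B)) \sum_(i <- S) cprod a b l i * coef c (m - l).
  rewrite (coef_mul_window m (supp_le_mul hA hB) hC); apply: eq_bigr => l _.
  have [cl0|cl] := eqVneq (coef c (m - l)) 0.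
    by rewrite /cprod cl0 mulr0 big1 // => i _; rewrite mulr0.
  have lC := coef_le hC cl.
  rewrite /cprod (coef_mul_seq (s := S)) ?int_window_uniq ?mulr_suml // => i.
  by move=> /(cprod_neq0 hA hB) hi; apply: mem_int_window; lia.
rewrite [RHS]exchange_big; apply: eq_bigr => i _.
have [ai0|ai] := eqVneq (coef a i) 0.
  by rewrite big1 ?big1_seq // => [l _|j _]; rewrite /F /cprod ai0 !mul0r.
have iA := coef_le hA ai.
rewrite [RHS](eq_big_supp (t := [seq i + j | j <- T])) ?big_map.
- apply: eq_bigr => j _; rewrite /F /cprod mulrA.
  by congr (_ * coef b _ * coef c _); lia.
- exact: int_window_uniq.
- by rewrite map_inj_uniq ?int_window_uniq // => j l /addrI.
- move=> l; rewrite !mulf_eq0 !negb_or => /andP [/andP [_ /(coef_le hB) ?]].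
  by move=> /(coef_le hC) ?; apply: mem_int_window; lia.
move=> l; rewrite !mulf_eq0 !negb_or => /andP [/andP [_ /(coef_le hB) ?]].
move=> /(coef_le hC) ?; apply/mapP; exists (l - i); last by rewrite addrC subrK.
by apply: mem_int_window; lia.
Qed.

Lemma LS_mulDl (a b c : LS) : LS_mul (LS_add a b) c = LS_add (LS_mul a c) (LS_mul b c).
Proof.
apply: LS_ext => m.
have hA := LS_deg_supp (a := a); have hB := LS_deg_supp (a := b).
have hC := LS_deg_supp (a := c).
pose D := Num.max (LS_deg a) (LS_deg b).
have hA' : supp_le a D by move=> i hi; apply: hA; move: hi; rewrite gt_max => /andP [].
have hB' : supp_le b D by move=> i hi; apply: hB; move: hi; rewrite gt_max => /andP [].
have hAB : supp_le (LS_add a b) D by move=> i hi; rewrite coef_add hA' ?hB' ?addr0.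
rewrite coef_add (coef_mul_window m hAB hC) (coef_mul_window m hA' hC).
rewrite (coef_mul_window m hB' hC) -big_split /=.
by apply: eq_bigr => i _; rewrite /cprod coef_add mulrDl.
Qed.

Lemma LS_mul1 (a : LS) : LS_mul (LS_one K) a = a.
Proof.
apply: LS_ext => m; rewrite (coef_mul_seq (s := [:: 0])) ?big_seq1 //.
  by rewrite /cprod coef_one mul1r subr0.
by move=> i; rewrite mem_seq1 /cprod coef_one; case: (i =P 0) => // _; rewrite mul0r eqxx.
Qed.

Lemma LS_addA (a b c : LS) : LS_add a (LS_add b c) = LS_add (LS_add a b) c.
Proof. by apply: LS_ext => m; rewrite !coef_add addrA. Qed.

Lemma LS_addC (a b : LS) : LS_add a b = LS_add b a.
Proof. by apply: LS_ext => m; rewrite !coef_add addrC. Qed.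

Lemma LS_add0 (a : LS) : LS_add (LS_zero K) a = a.
Proof. by apply: LS_ext => m; rewrite coef_add coef_zero add0r. Qed.

Lemma LS_addN (a : LS) : LS_add (LS_opp a) a = LS_zero K.
Proof. by apply: LS_ext => m; rewrite coef_add coef_opp coef_zero addNr. Qed.

End LaurentRing.

HB.instance Definition _ (K : finFieldType) := gen_eqMixin (LS K).
HB.instance Definition _ (K : finFieldType) := gen_choiceMixin (LS K).
HB.instance Definition _ (K : finFieldType) :=
  GRing.isZmodule.Build (LS K) (@LS_addA K) (@LS_addC K) (@LS_add0 K) (@LS_addN K).

Lemma LS_one_neq0 (K : finFieldType) : LS_one K != LS_zero K.
Proof.
apply/eqP => /(congr1 (fun a => coef a 0)).
by rewrite coef_one coef_zero => /eqP; rewrite oner_eq0.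
Qed.

HB.instance Definition _ (K : finFieldType) :=
  GRing.Zmodule_isComNzRing.Build (LS K) (@LS_mulA K) (@LS_mulC K) (@LS_mul1 K)
    (@LS_mulDl K) (@LS_one_neq0 K).

Section LaurentAbs.
Variable K : finFieldType.
Local Notation LS := (LS K).
Local Notation coef := (@coef K).
Local Notation q := (#|K|%:R : R).

Lemma coefD (a b : LS) m : coef (a + b) m = coef a m + coef b m. Proof. by []. Qed.
Lemma coefN (a : LS) m : coef (- a) m = - coef a m. Proof. by []. Qed.

Lemma LS_deg_coef (a : LS) : a != 0 -> coef a (LS_deg a) != 0.
Proof. by move=> /eqP /LS_nzP /LS_deg_spec []. Qed.

Lemma q_gt1 : 1 < q.
Proof. by rewrite ltr1n card_finNzRing_gt1. Qed.

Lemma LS_absE (a : LS) : LS_abs a = if a == 0 then 0 else q ^ LS_deg a.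
Proof.
rewrite /LS_abs; case: pselect => [/LS_nzP|na]; case: eqP => // /eqP a0.
by case: na; apply/LS_nzP/eqP.
Qed.

Lemma LS_abs0 : LS_abs (0 : LS) = 0.
Proof. by rewrite LS_absE eqxx. Qed.

Lemma LS_abs_ge0 (a : LS) : 0 <= LS_abs a.
Proof.
by rewrite LS_absE; case: ifP => // _; rewrite exprz_ge0 // ltW // (lt_trans ltr01 q_gt1).
Qed.

Lemma LS_abs_gt0 (a : LS) : a != 0 -> 0 < LS_abs a.
Proof. by rewrite LS_absE => /negPf ->; rewrite exprz_gt0 // (lt_trans ltr01 q_gt1). Qed.

Lemma LS_abs_coef (a : LS) i : coef a i != 0 -> q ^ i <= LS_abs a.
Proof.
move=> ai; have a0 : a != 0 by apply: contraNneq ai => ->.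
rewrite LS_absE (negPf a0) ler_weXz2l ?(ltW q_gt1) //.
exact: coef_le (LS_deg_supp (a := a)) ai.
Qed.

Lemma LS_abs_add (a b : LS) : LS_abs (a + b) <= Num.max (LS_abs a) (LS_abs b).
Proof.
have [->|ab0] := eqVneq (a + b) 0; first by rewrite LS_abs0 le_max LS_abs_ge0.
move: (LS_deg_coef ab0); rewrite LS_absE (negPf ab0) coefD le_max.
have [a0|/LS_abs_coef -> //] := eqVneq (coef a (LS_deg (a + b))) 0.
by rewrite a0 add0r => /LS_abs_coef ->; rewrite orbT.
Qed.

Lemma LS_absN (a : LS) : LS_abs (- a) = LS_abs a.
Proof.
have [->|a0] := eqVneq a 0; first by rewrite oppr0.
rewrite !LS_absE oppr_eq0 (negPf a0) (@LS_deg_unique _ (- a) (LS_deg a)) //.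
  by rewrite coefN oppr_eq0 LS_deg_coef.
by move=> i /(LS_deg_supp (a := a)); rewrite coefN => ->; rewrite oppr0.
Qed.

Lemma LS_abs_mul (a b : LS) : LS_abs (a * b) = LS_abs a * LS_abs b.
Proof.
have [->|a0] := eqVneq a 0; first by rewrite mul0r LS_abs0 mul0r.
have [->|b0] := eqVneq b 0; first by rewrite mulr0 LS_abs0 mulr0.
have hA := LS_deg_supp (a := a); have hB := LS_deg_supp (a := b).
have top : coef (a * b) (LS_deg a + LS_deg b) = coef a (LS_deg a) * coef b (LS_deg b).
  rewrite (coef_mul_seq (s := [:: LS_deg a])) ?big_seq1 => // [|i].
    by rewrite /cprod addrAC subrr add0r.
  by move/(cprod_neq0 hA hB); rewrite mem_seq1 addrK -eq_le eq_sym.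
have ab0 : coef (a * b) (LS_deg a + LS_deg b) != 0 by rewrite top mulf_neq0 ?LS_deg_coef.
have ab : a * b != 0 by apply: contraNneq ab0 => ->.
rewrite !LS_absE (negPf a0) (negPf b0) (negPf ab).
rewrite (LS_deg_unique ab0 (supp_le_mul hA hB)) exprzDr // unitfE.
by rewrite gt_eqF // (lt_trans ltr01 q_gt1).
Qed.

Lemma LS_abs_addr_lt (u t : LS) : LS_abs t < LS_abs u -> LS_abs (u + t) = LS_abs u.
Proof.
move=> tu; apply/eqP; rewrite eq_le; apply/andP; split.
  by apply: le_trans (LS_abs_add u t) _; rewrite ge_max lexx ltW.
have := LS_abs_add (u + t) (- t); rewrite addrK LS_absN le_max.
by case/orP => // ut; move: tu; rewrite ltNge ut.
Qed.

Lemma LS_abs_sum (k : nat) (F : 'I_k -> LS) : LS_abs (\sum_(i < k) F i) <= vnorm F.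
Proof.
rewrite /vnorm; elim/big_rec2: _ => [|i y1 y2 _ h]; first by rewrite LS_abs0.
by apply: le_trans (LS_abs_add _ _) _; rewrite ge_max le_max lexx le_max h !orbT.
Qed.

Definition LS_X (N : int) : LS.
Proof. by exists (fun m => (m == N)%:R); exists N => m /gt_eqF ->. Defined.

Lemma LS_abs_X N : LS_abs (LS_X N) = q ^ N.
Proof.
have XN : coef (LS_X N) N != 0 by rewrite /coef /= eqxx oner_eq0.
have X0 : LS_X N != 0 by apply: contraNneq XN => ->.
by rewrite LS_absE (negPf X0) (LS_deg_unique XN) // => m /gt_eqF; rewrite /coef /= => ->.
Qed.

Lemma vnorm_ge0 k (x : 'I_k -> LS) : 0 <= vnorm x.
Proof. exact: bigmax_ge_id. Qed.

Lemma vnorm_ge k (x : 'I_k -> LS) i : LS_abs (x i) <= vnorm x.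
Proof. exact: le_bigmax. Qed.

Lemma vnorm_le k (x : 'I_k -> LS) (s : R) :
  0 <= s -> (forall i, LS_abs (x i) <= s) -> vnorm x <= s.
Proof. by move=> s0 h; apply: bigmax_le. Qed.

Lemma vball_open d (x0 : 'I_d -> LS) s : vopen (vball x0 s).
Proof.
move=> y /= ys; exists (s - vnorm (vsub y x0)); first by rewrite subr_gt0.
move=> z /= zy; apply: le_lt_trans (_ : _ <= Num.max (vnorm (vsub z y)) (vnorm (vsub y x0))) _.
  apply: vnorm_le => [|i]; first by rewrite le_max vnorm_ge0.
  rewrite /vsub /LS_sub -[LS_add _ _]/(z i - x0 i) -(subrK (y i) (z i)) -addrA.
  by apply: le_trans (LS_abs_add _ _) _; rewrite ge_max !le_max !vnorm_ge ?orbT.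
by rewrite gt_max ys andbT (lt_le_trans zy) // gerBl vnorm_ge0.
Qed.

Lemma vball_center d (x0 : 'I_d -> LS) (s : R) : 0 < s -> vball x0 s x0.
Proof.
move=> s_gt0; apply: le_lt_trans s_gt0; apply: vnorm_le => // i.
by rewrite /vsub /LS_sub -[LS_add _ _]/(x0 i - x0 i) subrr LS_abs0.
Qed.

Lemma LS_abs_vdot k (a x : 'I_k -> LS) : vnorm x <= 1 -> LS_abs (vdot a x) <= vnorm a.
Proof.
move=> x_le1; apply: le_trans (LS_abs_sum _) _; apply: vnorm_le (vnorm_ge0 _) _ => i.
rewrite LS_abs_mul; apply: le_trans (vnorm_ge a i).
by rewrite ler_piMr ?LS_abs_ge0 // (le_trans (vnorm_ge x i)).
Qed.

Definition mxnorm m k (A : 'M[LS]_(m, k)) : R :=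
  \big[Num.max/0]_(i < m) vnorm (fun j => A i j).

Lemma det_mul_abs_le n (M : 'M[LS]_n) (v : 'cV[LS]_n) j :
  LS_abs (\det M) * LS_abs (v j 0) <= mxnorm (\adj M) * vnorm (fun k => (M *m v) k 0).
Proof.
have cramer : (\adj M *m (M *m v)) j 0 = \det M * v j 0.
  by rewrite mulmxA mul_adj_mx mul_scalar_mx !mxE.
rewrite -LS_abs_mul -cramer mxE; apply: le_trans (LS_abs_sum _) _.
apply: vnorm_le => [|k]; first by rewrite mulr_ge0 ?vnorm_ge0 ?bigmax_ge_id.
rewrite LS_abs_mul ler_pM ?LS_abs_ge0 //; last exact: vnorm_ge (fun k => (M *m v) k 0) k.
exact: le_trans (vnorm_ge (fun l => \adj M j l) k) (le_bigmax _ _ j).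
Qed.

Lemma vnorm_unbounded k (i0 : 'I_k) (M0 : R) : exists a : 'I_k -> LS, M0 <= vnorm a.
Proof.
exists (fun=> LS_X (Num.bound `|M0|)%:Z); apply: le_trans (vnorm_ge _ i0).
rewrite LS_abs_X; apply: le_trans (ler_norm M0) _.
apply/ltW/(lt_le_trans (archi_boundP (normr_ge0 M0))).
by rewrite -exprnP -natrX ler_nat ltnW // ltn_expl // card_finNzRing_gt1.
Qed.

End LaurentAbs.

Definition ocons (T : Type) (n : nat) (x0 : T) (x : 'I_n -> T) : 'I_n.+1 -> T :=
  fun j => if unlift ord0 j is Some i then x i else x0.

Lemma ocons0 T n (x0 : T) (x : 'I_n -> T) : ocons x0 x ord0 = x0.
Proof. by rewrite /ocons unlift_none. Qed.

Lemma oconsS T n (x0 : T) (x : 'I_n -> T) i : ocons x0 x (lift ord0 i) = x i.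
Proof. by rewrite /ocons liftK. Qed.

Section UnisolventPoints.
Variables (F : comNzRingType) (T : Type) (W : set T).

Definition lin_indep_on n (G : 'I_n -> T -> F) :=
  forall c : 'I_n -> F, (forall x, W x -> \sum_(j < n) c j * G j x = 0) -> forall j, c j = 0.

Lemma lin_indep_on_lift n (G : 'I_n.+1 -> T -> F) :
  lin_indep_on G -> lin_indep_on (fun j => G (lift ord0 j)).
Proof.
move=> indep c hc j; rewrite -(oconsS 0 c); apply: indep => x Wx.
rewrite big_ord_recl ocons0 mul0r add0r -[RHS](hc x Wx).
by apply: eq_bigr => i _; rewrite oconsS.
Qed.

Hypothesis W_neq0 : W !=set0.

(* Induction on [n]: a good point for the first function is added to good
   points for the others, expanding the determinant along the new row. *)
Lemma lin_indep_points n (G : 'I_n -> T -> F) : lin_indep_on G ->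
  exists y : 'I_n -> T, (forall k, W (y k)) /\ \det (\matrix_(k, j) G j (y k)) != 0.
Proof.
elim: n G => [|n IH] G indep.
  have [x0 Wx0] := W_neq0.
  by exists (fun=> x0); split=> [//|]; rewrite det_mx00 oner_neq0.
have [y [Wy dety]] := IH _ (lin_indep_on_lift indep).
pose A x := \matrix_(k, j) G j (ocons x y k).
pose C (j : 'I_n.+1) := (-1) ^+ j * \det (\matrix_(k, l) G (lift j l) (y k)).
have detA x : \det (A x) = \sum_j C j * G j x.
  rewrite (expand_det_row _ ord0); apply: eq_bigr => j _.
  rewrite mxE ocons0 mulrC /cofactor /C add0n; congr (_ * \det _ * _).
  by apply/matrixP => k l; rewrite !mxE oconsS.
have [[x Wx detx]|no_x] := pselect (exists2 x, W x & \det (A x) != 0).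
  exists (ocons x y); split => // k.
  by rewrite /ocons; case: unlift.
have C0 : C ord0 = 0.
  apply: indep => x Wx; rewrite -detA; apply/eqP; apply: contraT => detx.
  by case: no_x; exists x.
by move: C0 dety; rewrite /C /= expr0 mul1r => ->; rewrite eqxx.
Qed.

End UnisolventPoints.

Lemma le_inf_sup (P : Type) (S : set P) (E : P -> set R) (c : R) :
  S !=set0 -> (forall p, S p -> has_ubound (E p)) ->
  (forall p, S p -> exists2 x, E p x & c <= x) ->
  c <= inf [set sup (E p) | p in S].
Proof.
move=> [p0 Sp0] ubE cE; apply: lb_le_inf; first by exists (sup (E p0)), p0.
move=> _ [p Sp <-]; have [x Ex cx] := cE p Sp.
exact: le_trans cx (ub_le_sup (ubE p Sp) Ex).
Qed.

Section AffineForms.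
Variables (K : finFieldType) (d n : nat).
Local Notation LS := (LS K).
Variable f : ('I_d -> LS) -> 'I_n -> LS.

Lemma sum_ocons_affine (a0 : LS) (a : 'I_n -> LS) x :
  \sum_(j < n.+1) ocons a0 a j * ocons 1 (f x) j = a0 + vdot a (f x).
Proof.
rewrite big_ord_recl !ocons0 mulr1; congr (_ + _).
by apply: eq_bigr => i _; rewrite !oconsS.
Qed.

Lemma affine_lin_indep (W : set ('I_d -> LS)) :
  (forall (c0 : LS) (c : 'I_n -> LS),
     (forall x, W x -> c0 + vdot c (f x) = 0) -> c0 = 0 /\ forall j, c j = 0) ->
  lin_indep_on W (fun j x => ocons 1 (f x) j).
Proof.
move=> indep c hc.
have [c00 cS] : c ord0 = 0 /\ forall i, c (lift ord0 i) = 0.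
  apply: indep => x Wx; rewrite -sum_ocons_affine -[RHS](hc x Wx).
  by apply: eq_bigr => j _; case: (unliftP ord0 j) => [i ->|->]; rewrite ?oconsS ?ocons0.
by move=> j; case: (unliftP ord0 j) => [i ->|->].
Qed.

Lemma affine_large_value (y : 'I_n.+1 -> 'I_d -> LS) :
  \det (\matrix_(k, j) ocons 1 (f (y k)) j) != 0 ->
  exists2 M0 : R, 1 < M0 & forall a0 a, M0 <= vnorm a ->
    exists k, 2 <= LS_abs (a0 + vdot a (f (y k))).
Proof.
set M := \matrix_(k, j) _ => detM.
have D_gt0 : 0 < LS_abs (\det M) by apply: LS_abs_gt0.
set t := 2 * mxnorm (\adj M) / LS_abs (\det M).
have t_ge0 : 0 <= t by rewrite divr_ge0 ?mulr_ge0 ?bigmax_ge_id ?ltW.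
exists (t + 2) => [|a0 a large]; first by lra.
apply: contrapT => small.
pose v := \col_j ocons a0 a j.
have Mv_le2 : vnorm (fun k => (M *m v) k 0) <= 2.
  apply: vnorm_le => // k.
  have -> : (M *m v) k 0 = a0 + vdot a (f (y k)).
    by rewrite mxE -sum_ocons_affine; apply: eq_bigr => j _; rewrite !mxE mulrC.
  by rewrite leNgt; apply/negP => /ltW u_ge2; apply: small; exists k.
have : vnorm a <= t.
  apply: vnorm_le => // i; rewrite ler_pdivlMr // mulrC.
  have := det_mul_abs_le M v (lift ord0 i); rewrite mxE oconsS => /le_trans; apply.
  by rewrite [2 * _]mulrC ler_wpM2l ?bigmax_ge_id.
by move: large; lra.
Qed.

Lemma affine_theta_ubound (theta : ('I_d -> LS) -> LS) (V : set ('I_d -> LS)) a0 a :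
  (forall x, V x -> vnorm (f x) <= 1) -> (forall x, V x -> LS_abs (theta x) <= 1) ->
  has_ubound [set LS_abs (a0 + vdot a (f x) + theta x) | x in V].
Proof.
move=> f_le1 theta_le1; exists (Num.max (Num.max (LS_abs a0) (vnorm a)) 1).
move=> _ [x Vx <-]; apply: le_trans (LS_abs_add _ _) _.
rewrite ge_max; apply/andP; split; last by rewrite le_max theta_le1 ?orbT.
apply: le_trans (LS_abs_add _ _) _.
by rewrite ge_max !le_max lexx (LS_abs_vdot a (f_le1 x Vx)) !orbT.
Qed.

End AffineForms.

Unset Implicit Arguments.

Theorem mainTheorem7 (K : finFieldType) (d n : nat)
  (hd : (0 < d)%N) (hn : (0 < n)%N)
  (U : set ('I_d -> LS K)) (x0 : 'I_d -> LS K)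
  (f : ('I_d -> LS K) -> 'I_n -> LS K) (theta : ('I_d -> LS K) -> LS K) :
  vopen U -> U x0 ->
  (* (II) *)
  (forall j : 'I_n, analytic_to_boundary U (fun x => f x j)) ->
  (forall x, U x -> f x (Ordinal hn) = x (Ordinal hd)) ->
  (* (III) *)
  (forall W : set ('I_d -> LS K), vopen W -> W `<=` U -> W !=set0 ->
     forall (c0 : LS K) (c : 'I_n -> LS K),
       (forall x, W x -> LS_add c0 (vdot c (f x)) = LS_zero K) ->
       c0 = LS_zero K /\ forall j, c j = LS_zero K) ->
  (* (IV) *)
  (forall x, U x -> vnorm (f x) <= 1) ->
  (forall j : 'I_n, grad_le1 U (fun x => f x j)) ->
  (forall (j : 'I_n) (beta : 'I_d -> nat), (\sum_(i < d) beta i)%N = 2%N ->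
     barPhi_le1 beta U (fun x => f x j)) ->
  (* (VI) *)
  analytic_to_boundary U theta ->
  (forall x, U x -> LS_abs (theta x) <= 1) ->
  grad_le1 U theta ->
  (forall beta : 'I_d -> nat, (\sum_(i < d) beta i)%N = 2%N -> barPhi_le1 beta U theta) ->
  (* conclusion *)
  exists2 r : Rdefinitions.R, 0 < r &
    forall V : set ('I_d -> LS K), V `<=` U -> V `<=` vball x0 r -> vnbhd x0 V ->
      exists2 M0 : Rdefinitions.R, 1 < M0 &
        0 < inf [set sup [set LS_abs (LS_add (LS_add p.2 (vdot p.1 (f x))) (theta x))
                         | x in V]
                | p in [set p : ('I_n -> LS K) * LS K | M0 <= vnorm p.1]].
Proof.
(* Any radius works: only (III) and the bounds on |f| and |theta| are used. *)
move=> _ _ _ _ indepU f_le1 _ _ _ theta_le1 _ _.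
exists 1 => // V VU _ [s s_gt0 ballV].
have ball_neq0 : vball x0 s !=set0 by exists x0; apply: vball_center.
have indep : lin_indep_on (vball x0 s) (fun j x => ocons 1 (f x) j).
  apply: affine_lin_indep => c0 c; apply: indepU => //; first exact: vball_open.
  by move=> x /ballV /VU.
have [y [y_ball detM]] := lin_indep_points ball_neq0 indep.
have [M0 M0_gt1 large] := affine_large_value detM.
exists M0 => //; apply: lt_le_trans (_ : 0 < 2) _ => //; apply: le_inf_sup.
- by have [a a_ge] := vnorm_unbounded K (Ordinal hn) M0; exists (a, 0).
- move=> [a a0] _ /=; apply: affine_theta_ubound => x /VU; [exact: f_le1 | exact: theta_le1].
move=> [a a0] /= /(large a0) [k u_ge2].
exists (LS_abs (a0 + vdot a (f (y k)) + theta (y k))); first by exists (y k); first exact: ballV.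
rewrite LS_abs_addr_lt //; apply: le_lt_trans (theta_le1 _ (VU _ (ballV _ (y_ball k)))) _.
by apply: lt_le_trans u_ge2; rewrite ltr1n.
Qed.
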